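(* Assume $g$ satisfies (Hg), and let $a\in(0,1)$ and $k>0$. Define $$d^-(a):=\max_{y\in(a,1)}\frac{g(y;a)}{y},\qquad d^+(a,k):=\max_{y\in(1-a,1)}\frac{-g(1-y;a)}{ky}.$$ Then: (i) for every $d\in(0,d^+(a,k))$ we have $c(a,d,k)\ge 0$; (ii) for every $d\in(0,d^-(a))$ we have $c(a,d,k)\le 0$. In particular, if $0<d<\min\{d^-(a),d^+(a,k)\}$, then $c(a,d,k)=0$.
   Context: A function $g:\mathbb R\times[0,1]\to\mathbb R$, $(u,a)\mapsto g(u;a)$, satisfies (Hg) if it is $C^1$ and for every $a\in(0,1)$: $g(0;a)=g(a;a)=g(1;a)=0$, $g'(0;a)<0$, $g'(1;a)<0$, $g'(a;a)>0$ (where $g'=\partial_u g$), $g(v;a)>0$ for $v\in(-\infty,0)\cup(a,1)$ and $g(v;a)<0$ for $v\in(0,a)\cup(1,\infty)$. For $k>0$, $a\in(0,1)$, $d>0$ consider the traveling wave problem: find $c\in\mathbb R$ and $\Phi:\mathbb R\to\mathbb R$ with $$-c\Phi'(\xi)=d\big(k\Phi(\xi+1)-(k+1)\Phi(\xi)+\Phi(\xi-1)\big)+g(\Phi(\xi);a)\quad(\xi\in\mathbb R),\qquad \lim_{\xi\to-\infty}\Phi(\xi)=0,\ \lim_{\xi\to+\infty}\Phi(\xi)=1.$$ It is known (Mallet-Paret) that under (Hg) this problem has a solution with $\Phi$ non-decreasing and that the speed $c$ is uniquely determined; it is denoted $c(a,d,k)$. *)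

From Stdlib Require Import Reals Lra.
Open Scope R_scope.

Definition cont_on_Rx01 (f : R -> R -> R) : Prop :=
  forall u a, 0 <= a <= 1 -> forall eps, 0 < eps ->
    exists delta, 0 < delta /\
      forall u' a', 0 <= a' <= 1 -> Rabs (u' - u) < delta -> Rabs (a' - a) < delta ->
        Rabs (f u' a' - f u a) < eps.

Definition Hg (g : R -> R -> R) : Prop :=
  exists gu : R -> R -> R,
    cont_on_Rx01 g /\ cont_on_Rx01 gu /\
    (forall u a, 0 <= a <= 1 -> derivable_pt_lim (fun v => g v a) u (gu u a)) /\
    (forall a, 0 < a < 1 ->
       g 0 a = 0 /\ g a a = 0 /\ g 1 a = 0 /\
       gu 0 a < 0 /\ gu 1 a < 0 /\ 0 < gu a a /\
       (forall v, (v < 0 \/ (a < v < 1)) -> 0 < g v a) /\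
       (forall v, ((0 < v < a) \/ 1 < v) -> g v a < 0)).

Definition tw_rhs (g : R -> R -> R) (a d k : R) (Phi : R -> R) (xi : R) : R :=
  d * (k * Phi (xi + 1) - (k + 1) * Phi xi + Phi (xi - 1)) + g (Phi xi) a.

(* (c, Phi) is a non-decreasing traveling wave solution:
   -c Phi'(xi) = tw_rhs ... for all xi, Phi(-oo) = 0, Phi(+oo) = 1.
   When c = 0 the equation contains no derivative (Phi need not be
   differentiable); when c <> 0, Phi is differentiable everywhere. *)
Definition tw_solution (g : R -> R -> R) (a d k c : R) (Phi : R -> R) : Prop :=
  (forall x y, x <= y -> Phi x <= Phi y) /\
  ((forall xi, exists D, derivable_pt_lim Phi xi D /\ - c * D = tw_rhs g a d k Phi xi)
   \/ (c = 0 /\ forall xi, 0 = tw_rhs g a d k Phi xi)) /\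
  (forall eps, 0 < eps -> exists M, forall xi, xi <= M -> Rabs (Phi xi) < eps) /\
  (forall eps, 0 < eps -> exists M, forall xi, M <= xi -> Rabs (Phi xi - 1) < eps).

Definition is_max_on_open (f : R -> R) (lo hi m : R) : Prop :=
  (exists y, lo < y < hi /\ f y = m) /\ (forall y, lo < y < hi -> f y <= m).

(** If [c < 0], pick [y] in [(1 - a, 1)] with [-g(1 - y; a) > d k y] (it exists
    because [d < d^+]) and a point [xi] where the continuous wave takes the value
    [1 - y].  There [-c Phi'(xi) >= 0] since [Phi] is non-decreasing, whereas the
    right-hand side is at most [d k y + g(1 - y; a) < 0], because
    [Phi(xi + 1) <= 1] and [Phi(xi - 1) <= Phi(xi)].  Symmetrically, if [c > 0],
    at a level [y] in [(a, 1)] with [g(y; a) > d y] the right-hand side is at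
    least [-d y + g(y; a) > 0] while [-c Phi'(xi) <= 0]. *)

From Stdlib Require Import Reals Lra.
Open Scope R_scope.

Lemma Rmult_lt_of_lt_div (a b c : R) : 0 < b -> a < c / b -> a * b < c.
Proof.
  intros Hb Hlt.
  replace c with (c / b * b) by (field; lra).
  now apply Rmult_lt_compat_r.
Qed.

Lemma nondecreasing_derivable_pt_lim_ge0 (f : R -> R) (x l : R) :
  (forall x y, x <= y -> f x <= f y) -> derivable_pt_lim f x l -> 0 <= l.
Proof.
  intros Hmono Hl.
  destruct (Rle_or_lt 0 l) as [Hge | Hlt]; [exact Hge | exfalso].
  destruct (Hl (- l / 2)) as [[del Hdel] Hquot]; [lra |]; simpl in Hquot.
  assert (Habs : Rabs (del / 2) < del) by (rewrite Rabs_pos_eq; lra).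
  specialize (Hquot (del / 2) ltac:(lra) Habs).
  assert (Hinc : 0 <= (f (x + del / 2) - f x) / (del / 2)).
  { apply Rle_mult_inv_pos; [| lra].
    assert (f x <= f (x + del / 2)) by (apply Hmono; lra).
    lra. }
  apply Rabs_def2 in Hquot.
  lra.
Qed.

Lemma nondecreasing_continuity_onto (f : R -> R) (x1 x2 y : R) :
  (forall x y, x <= y -> f x <= f y) -> continuity f ->
  f x1 < y -> y < f x2 -> exists z, f z = y.
Proof.
  intros Hmono Hcont H1 H2.
  assert (Hx : x1 < x2).
  { destruct (Rlt_or_le x1 x2) as [Hlt | Hle]; [exact Hlt |].
    specialize (Hmono _ _ Hle); lra. }
  assert (Hcont' : continuity (fun x => f x - y)).
  { apply continuity_minus; [exact Hcont | apply continuity_const; now intros ? ?]. }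
  destruct (IVT _ _ _ Hcont' Hx) as [z [_ Hz]]; [lra | lra |].
  exists z; lra.
Qed.

Section TravelingWave.

Variables (g : R -> R -> R) (a d k c : R) (Phi : R -> R).
Hypothesis Hsol : tw_solution g a d k c Phi.

Lemma tw_solution_bounds (xi : R) : 0 <= Phi xi <= 1.
Proof.
  destruct Hsol as [Hmono [_ [Hminus Hplus]]].
  split.
  - destruct (Rle_or_lt 0 (Phi xi)) as [Hge | Hlt]; [exact Hge | exfalso].
    destruct (Hminus (- Phi xi)) as [M HM]; [lra |].
    assert (Hle : Phi (Rmin xi M) <= Phi xi) by (apply Hmono, Rmin_l).
    pose proof (Rabs_def2 _ _ (HM (Rmin xi M) (Rmin_r _ _))).
    lra.
  - destruct (Rle_or_lt (Phi xi) 1) as [Hle | Hlt]; [exact Hle | exfalso].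
    destruct (Hplus (Phi xi - 1)) as [M HM]; [lra |].
    assert (Hge : Phi xi <= Phi (Rmax xi M)) by (apply Hmono, Rmax_l).
    pose proof (Rabs_def2 _ _ (HM (Rmax xi M) (Rmax_r _ _))).
    lra.
Qed.

(** Since [-c Phi' = tw_rhs] with [Phi' >= 0], [c * tw_rhs = - c^2 Phi' <= 0]. *)
Lemma tw_solution_level_sign (u : R) :
  c <> 0 -> 0 < u < 1 ->
  exists xi, Phi xi = u /\ c * tw_rhs g a d k Phi xi <= 0.
Proof.
  intros Hc Hu.
  destruct Hsol as [Hmono [[Hderiv | [Hc0 _]] [Hminus Hplus]]]; [| contradiction].
  assert (Hcont : continuity Phi).
  { intro x; destruct (Hderiv x) as [D [HD _]].
    apply derivable_continuous_pt; now exists D. }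
  destruct (Hminus u) as [M1 HM1]; [lra |].
  destruct (Hplus (1 - u)) as [M2 HM2]; [lra |].
  specialize (HM1 M1 (Rle_refl _)); specialize (HM2 M2 (Rle_refl _)).
  apply Rabs_def2 in HM1; apply Rabs_def2 in HM2.
  destruct (nondecreasing_continuity_onto Phi M1 M2 u Hmono Hcont)
    as [xi Hxi]; [lra | lra |].
  destruct (Hderiv xi) as [D [HD Heq]].
  exists xi; split; [exact Hxi |].
  rewrite <- Heq.
  assert (0 <= D) by exact (nondecreasing_derivable_pt_lim_ge0 Phi xi D Hmono HD).
  assert (0 <= c * c * D) by (apply Rmult_le_pos; [nra | lra]).
  nra.
Qed.

Hypotheses (Hd : 0 <= d) (Hk : 0 <= k).

Lemma tw_rhs_le (xi : R) :
  tw_rhs g a d k Phi xi <= d * k * (1 - Phi xi) + g (Phi xi) a.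
Proof.
  destruct Hsol as [Hmono _].
  assert (Hnext := tw_solution_bounds (xi + 1)).
  assert (Hprev : Phi (xi - 1) <= Phi xi) by (apply Hmono; lra).
  unfold tw_rhs.
  assert (0 <= d * k * (1 - Phi (xi + 1))) by (apply Rmult_le_pos; [nra | lra]).
  assert (0 <= d * (Phi xi - Phi (xi - 1))) by (apply Rmult_le_pos; lra).
  nra.
Qed.

Lemma tw_rhs_ge (xi : R) :
  - d * Phi xi + g (Phi xi) a <= tw_rhs g a d k Phi xi.
Proof.
  destruct Hsol as [Hmono _].
  assert (Hprev := tw_solution_bounds (xi - 1)).
  assert (Hnext : Phi xi <= Phi (xi + 1)) by (apply Hmono; lra).
  unfold tw_rhs.
  assert (0 <= d * k * (Phi (xi + 1) - Phi xi)) by (apply Rmult_le_pos; [nra | lra]).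
  assert (0 <= d * Phi (xi - 1)) by (apply Rmult_le_pos; lra).
  nra.
Qed.

Lemma tw_speed_ge0_of_level (u : R) :
  0 < u < 1 -> d * k * (1 - u) + g u a < 0 -> 0 <= c.
Proof.
  intros Hu Hneg.
  destruct (Rle_or_lt 0 c) as [Hge | Hlt]; [exact Hge | exfalso].
  destruct (tw_solution_level_sign u) as [xi [Hxi Hsign]]; [lra | exact Hu |].
  assert (Hle := tw_rhs_le xi); rewrite Hxi in Hle.
  nra.
Qed.

Lemma tw_speed_le0_of_level (u : R) :
  0 < u < 1 -> 0 < - d * u + g u a -> c <= 0.
Proof.
  intros Hu Hpos.
  destruct (Rle_or_lt c 0) as [Hle | Hgt]; [exact Hle | exfalso].
  destruct (tw_solution_level_sign u) as [xi [Hxi Hsign]]; [lra | exact Hu |].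
  assert (Hge := tw_rhs_ge xi); rewrite Hxi in Hge.
  nra.
Qed.

End TravelingWave.

Theorem proposition2p3 (g : R -> R -> R) (a k dm dp : R) :
  Hg g -> 0 < a < 1 -> 0 < k ->
  is_max_on_open (fun y => g y a / y) a 1 dm ->
  is_max_on_open (fun y => - g (1 - y) a / (k * y)) (1 - a) 1 dp ->
  (forall d c Phi, 0 < d < dp -> tw_solution g a d k c Phi -> 0 <= c) /\
  (forall d c Phi, 0 < d < dm -> tw_solution g a d k c Phi -> c <= 0) /\
  (forall d c Phi, 0 < d < Rmin dm dp -> tw_solution g a d k c Phi -> c = 0).
Proof.
  intros _ Ha Hk [[ym [Hym Hgm]] _] [[yp [Hyp Hgp]] _].
  assert (Hplus : forall d c Phi, 0 < d < dp -> tw_solution g a d k c Phi -> 0 <= c).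
  { intros d c Phi Hd Hsol.
    apply (tw_speed_ge0_of_level g a d k c Phi Hsol ltac:(lra) ltac:(lra) (1 - yp));
      [lra |].
    assert (d * (k * yp) < - g (1 - yp) a)
      by (apply Rmult_lt_of_lt_div; [nra | lra]).
    lra. }
  assert (Hminus : forall d c Phi, 0 < d < dm -> tw_solution g a d k c Phi -> c <= 0).
  { intros d c Phi Hd Hsol.
    apply (tw_speed_le0_of_level g a d k c Phi Hsol ltac:(lra) ltac:(lra) ym); [lra |].
    assert (d * ym < g ym a) by (apply Rmult_lt_of_lt_div; lra).
    lra. }
  split; [exact Hplus |]; split; [exact Hminus |].
  intros d c Phi Hd Hsol.
  assert (Rmin dm dp <= dm) by apply Rmin_l.
  assert (Rmin dm dp <= dp) by apply Rmin_r.
  assert (0 <= c) by (apply (Hplus d c Phi); [lra | exact Hsol]).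
  assert (c <= 0) by (apply (Hminus d c Phi); [lra | exact Hsol]).
  lra.
Qed.
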